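(* Let $I$ be a finite set, $T$ a tree on $I$ with $n$ inner vertices, fix a nice total order on $\mathcal{V}(T)$ with associated edge-labeling $\lambda$, and let $m:\hat{0}=x_0\lhd x_1\lhd\dots\lhd x_n=T$ be the unique maximal chain of $[\hat{0},T]$ with increasing labels. For $i\in[n]$ let $\mathsf{A}_i=\{a \text{ atom}: a\le x_i,\ a\not\le x_{i-1}\}$ and $\mathsf{B}_i=\{a\text{ atom}: \lambda(\hat{0},a)=i\}$. Then $\mathsf{A}_i=\mathsf{B}_i$ for every $i\in[n]$.
   Context: A tree on a finite set $I$ is a (non-planar) rooted binary tree whose leaves are bijectively labeled by $I$: vertices are inner vertices (valence $3$) and leaves and the root (valence $1$), edges oriented towards the root; one-leaf trees are allowed. A forest on $I$ is a set of trees whose leaf sets partition $I$; $\mathcal{V}(F)$ is its set of inner vertices. For forests $F,G$ on $I$, $F \leq G$ if there is a continuous map $F\to G$ which (D1) is increasing with respect to orientation towards the root, (D2) maps inner vertices to inner vertices injectively, (D3) is the identity of $I$ on leaves, (D4) is injective on each tree of $F$. This gives the poset $\operatorname{For}(I)$, graded by number of inner vertices, with minimum $\hat{0}$ (no inner vertices); $[\hat{0},T]$ is a lattice. For $F \leq G \leq T$ inner vertices are regarded as subsets $\mathcal{V}(F)\subseteq\mathcal{V}(G)\subseteq\mathcal{V}(T)$; if $F\lhd G$ there is a unique $v$ with $\mathcal{V}(G)=\mathcal{V}(F)\cup\{v\}$. Partial order on $\mathcal{V}(T)$: $v\preceq v'$ if $v'$ lies on the path between the root and $v$. A nice total order is any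 total order on $\mathcal{V}(T)$ extending $\preceq$; using it the inner vertices are labeled $1,\dots,n$ increasingly and identified with their labels. The edge-labeling is $\lambda(F,G)$ := the unique element of $\mathcal{V}(G)\setminus\mathcal{V}(F)$ for $F\lhd G$ in $[\hat{0},T]$. Atoms are the elements covering $\hat{0}$. *)

From mathcomp Require Import all_boot.
Set Implicit Arguments. Unset Strict Implicit. Unset Printing Implicit Defensive.

Section Forests.
Variable I : finType.

(* A forest on I is encoded by the set of leaf sets ("clusters") of its inner
   vertices; leaves are the singletons [set x]. *)
Definition verts (F : {set {set I}}) : {set {set I}} :=
  F :|: [set [set x] | x : I].

Definition child (F : {set {set I}}) (P C : {set I}) : Prop :=
  C \in F /\ P \in verts F /\ P \proper C /\
  ~ (exists Q, Q \in verts F /\ P \proper Q /\ Q \proper C).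

Definition is_forest (F : {set {set I}}) : Prop :=
  (forall C, C \in F -> 2 <= #|C|) /\
  (forall C D, C \in F -> D \in F -> [\/ C \subset D, D \subset C | [disjoint C & D]]) /\
  (forall C, C \in F -> exists P1 P2, [/\ P1 != P2, child F P1 C, child F P2 C &
       forall P, child F P C -> P = P1 \/ P = P2]).

Definition is_tree (T : {set {set I}}) : Prop :=
  is_forest T /\ (setT \in T \/ #|I| = 1).

(* Discrete form of a map F -> G satisfying (D1)-(D4): phi sends inner
   vertices of F injectively to inner vertices of G (leaves to themselves);
   the two children of an inner vertex C of F are sent below two distinct
   children of phi C (this is monotonicity plus injectivity on each tree). *)
Definition img (F : {set {set I}}) (phi : {set I} -> {set I}) (P : {set I}) :=
  if P \in F then phi P else P.

Definition forest_map (F G : {set {set I}}) (phi : {set I} -> {set I}) : Prop :=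
  (forall C, C \in F -> phi C \in G) /\
  {in F &, injective phi} /\
  (forall C P1 P2, child F P1 C -> child F P2 C -> P1 != P2 ->
     exists Q1 Q2, [/\ Q1 != Q2, child G Q1 (phi C), child G Q2 (phi C),
                      img F phi P1 \subset Q1 & img F phi P2 \subset Q2]).

Definition fle (F G : {set {set I}}) : Prop :=
  is_forest F /\ is_forest G /\ exists phi, forest_map F G phi.

Definition fcover (F G : {set {set I}}) : Prop :=
  fle F G /\ F <> G /\ forall H, fle F H -> fle H G -> H = F \/ H = G.

Definition atomT (T a : {set {set I}}) : Prop := fle a T /\ fcover set0 a.

(* edge label lambda(F,G) = v, inner vertices of F,G viewed inside V(T)
   through their maps to T *)
Definition lam (T F G : {set {set I}}) (v : {set I}) : Prop :=
  exists phiF phiG, [/\ forest_map F T phiF, forest_map G T phiG,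
    v \notin phiF @: F & phiG @: G = v |: phiF @: F].

(* a nice total order on V(T), given by its labelling 1..n *)
Definition nice_labelling (T : {set {set I}}) (n : nat) (lab : {set I} -> nat) : Prop :=
  {in T &, injective lab} /\
  (forall v, v \in T -> 1 <= lab v <= n) /\
  (forall v w, v \in T -> w \in T -> v \proper w -> lab v < lab w).

End Forests.

(* An atom of [0,T] is a cherry {{p,q}}, and a cherry lies below a forest G
   exactly when some inner vertex of G separates p and q, i.e. has them in two
   different children; in the tree T this vertex u is unique, and it is
   lambda(0, cherry).  Maps into T are unique, so by induction along the chain,
   whose labels are forced to be 1, ..., n, the image of x_j in T is the set of
   inner vertices labelled at most j.  This set is closed downwards, which
   forces the map to be the inclusion and to preserve the children of every
   vertex; hence the cherry lies below x_j iff lab u <= j, and it first appears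
   at step lab u. *)

From mathcomp Require Import all_boot zify.
Set Implicit Arguments. Unset Strict Implicit. Unset Printing Implicit Defensive.

Section Forests.
Variable I : finType.
Implicit Types (F G : {set {set I}}) (C D P Q R : {set I}).

Lemma mem_verts F P : P \in F -> P \in verts F.
Proof. by rewrite inE => ->. Qed.

Lemma set1_verts F (p : I) : [set p] \in verts F.
Proof. by rewrite inE; apply/orP; right; apply/imsetP; exists p. Qed.

Lemma verts_set1 F P : P \in verts F -> P \notin F -> exists p, P = [set p].
Proof. by rewrite inE => /orP[->//|/imsetP[p _ ->]] _; exists p. Qed.

Lemma child_sub F P C : child F P C -> P \subset C.
Proof. by case=> _ [_ [/proper_sub]]. Qed.

Lemma child_above F D C : D \in verts F -> C \in F -> D \proper C ->
  exists Q, child F Q C /\ D \subset Q.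
Proof.
move=> DF CF ltDC.
have D_ok : (D \in verts F) && (D \subset D) && (D \proper C) by rewrite DF subxx.
pose ok Q := (Q \in verts F) && (D \subset Q) && (Q \proper C).
case: (@arg_maxnP _ D ok (fun Q => #|Q|) D_ok) => Q /andP[/andP[QF leDQ] ltQC] Qmax.
exists Q; do 4!split => //.
case=> R [RF [ltQR ltRC]].
have := Qmax R; rewrite /ok RF (subset_trans leDQ (proper_sub ltQR)) ltRC.
by move=> /(_ isT) /=; rewrite leqNgt (proper_card ltQR).
Qed.

Definition separates F (v : {set I}) (p q : I) := exists R1 R2,
  [/\ R1 != R2, child F R1 v, child F R2 v, p \in R1 & q \in R2].

Lemma separates_inner F v p q : separates F v p q -> v \in F.
Proof. by case=> R1 [R2 [_ [vF _] _ _ _]]. Qed.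

Lemma separates_mem F v p q : separates F v p q -> p \in v.
Proof. by case=> R1 [R2 [_ ch1 _ pR1 _]]; apply: subsetP (child_sub ch1) _ pR1. Qed.

Section Forest.
Variable F : {set {set I}}.
Hypothesis forF : is_forest F.

Lemma verts_nonempty P : P \in verts F -> exists p, p \in P.
Proof.
rewrite inE => /orP[/forF.1 cardP|/imsetP[p _ ->]]; last by exists p; rewrite set11.
by apply/card_gt0P; apply: leq_trans cardP.
Qed.

Lemma verts_laminar P Q p : P \in verts F -> Q \in verts F ->
  p \in P -> p \in Q -> P \subset Q \/ Q \subset P.
Proof.
rewrite !inE => /orP[PF|/imsetP[y _ ->]]; last first.
  by move=> _ /[1!inE] /eqP-> QF; left; rewrite sub1set.
move=> /orP[QF|/imsetP[z _ ->]]; last by move=> pP /[1!inE] /eqP<-; right; rewrite sub1set.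
move=> pP pQ; case: (forF.2.1 _ _ PF QF) => [||disPQ]; auto.
by rewrite (disjointFr disPQ pP) in pQ.
Qed.

Lemma eq_child P Q C p : child F P C -> child F Q C -> p \in P -> p \in Q -> P = Q.
Proof.
move=> [_ [PF [ltPC noPC]]] [_ [QF [ltQC noQC]]] pP pQ.
case: (eqVneq P Q) => // neq; exfalso.
have [leP|leQ] := verts_laminar PF QF pP pQ.
  by apply: noPC; exists Q; split => //; rewrite properEneq neq leP.
by apply: noQC; exists P; split => //; rewrite properEneq eq_sym neq leQ.
Qed.

Lemma child_of_two C P1 P2 R : P1 != P2 ->
  child F P1 C -> child F P2 C -> child F R C -> R = P1 \/ R = P2.
Proof.
move=> neq12 ch1 ch2 chR; have [CF _] := ch1.
have [Q1 [Q2 [_ _ _ onlyQ]]] := forF.2.2 C CF.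
move: neq12; case: (onlyQ _ ch1) => ->; case: (onlyQ _ ch2) => ->;
  case: (onlyQ _ chR) => ->; rewrite ?eqxx //; auto.
Qed.

Lemma children_cover C P1 P2 : P1 != P2 ->
  child F P1 C -> child F P2 C -> C = P1 :|: P2.
Proof.
move=> neq12 ch1 ch2; have [CF _] := ch1.
apply/eqP; rewrite eqEsubset subUset (child_sub ch1) (child_sub ch2) !andbT.
apply/subsetP => p pC.
have ltpC : [set p] \proper C.
  rewrite properE sub1set pC; apply: contraTN (forF.1 _ CF) => /subset_leq_card.
  by rewrite cards1 -ltnNge ltnS.
have [Q [chQ]] := child_above (set1_verts F p) CF ltpC.
rewrite sub1set inE => pQ.
by case: (child_of_two neq12 ch1 ch2 chQ) => <-; rewrite pQ ?orbT.
Qed.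

Lemma separates_unique v w p q : separates F v p q -> separates F w p q -> v = w.
Proof.
wlog levw : v w / v \subset w => [lemma sepv sepw|].
  have [vw|wv] := verts_laminar (mem_verts (separates_inner sepv))
    (mem_verts (separates_inner sepw)) (separates_mem sepv) (separates_mem sepw).
    exact: lemma.
  by apply/esym/lemma.
move=> [R1 [R2 [_ ch1 ch2 pR1 qR2]]] [S1 [S2 [neqS ch1' ch2' pS1 qS2]]].
case: (eqVneq v w) => // neqvw; exfalso.
have ltvw : v \proper w by rewrite properEneq neqvw.
have [Q [chQ levQ]] := child_above (mem_verts ch1.1) ch1'.1 ltvw.
have pQ : p \in Q by apply: subsetP levQ _ (subsetP (child_sub ch1) _ pR1).
have qQ : q \in Q by apply: subsetP levQ _ (subsetP (child_sub ch2) _ qR2).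
by move: neqS; rewrite -(eq_child chQ ch1' pQ pS1) -(eq_child chQ ch2' qQ qS2) eqxx.
Qed.

Lemma separates_pair p q : [set p; q] \in F -> separates F [set p; q] p q.
Proof.
move=> pqF; have [P1 [P2 [neq12 ch1 ch2 _]]] := forF.2.2 _ pqF.
have pq_cover := children_cover neq12 ch1 ch2.
have notboth P : child F P [set p; q] -> p \in P -> q \notin P.
  move=> [_ [_ [ltP _]]] pP; apply: contraTN ltP => qP.
  by rewrite properE subUset !sub1set pP qP andbF.
have : p \in P1 :|: P2 by rewrite -pq_cover !inE eqxx.
have : q \in P1 :|: P2 by rewrite -pq_cover !inE eqxx orbT.
rewrite !inE => /orP[qP1|qP2] /orP[pP1|pP2].
- by rewrite (negbTE (notboth _ ch1 pP1)) in qP1.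
- by exists P2, P1; split; rewrite // eq_sym.
- by exists P1, P2.
- by rewrite (negbTE (notboth _ ch2 pP2)) in qP2.
Qed.

Lemma forest_has_cherry : F != set0 -> exists p q, p != q /\ [set p; q] \in F.
Proof.
case/set0Pn => C0 C0F.
have [M MF Mmin] := @arg_minnP _ C0 (mem F) (fun C => #|C|) C0F.
have [P1 [P2 [neq12 ch1 ch2 _]]] := forF.2.2 M MF.
have leaf P : child F P M -> exists p, P = [set p].
  move=> [_ [PF [ltPM _]]]; apply: verts_set1 PF _.
  by apply: contraTN (proper_card ltPM) => /Mmin; rewrite -leqNgt.
have [[p eP1] [q eP2]] := (leaf _ ch1, leaf _ ch2).
exists p, q; split; first by apply: contraNneq neq12 => epq; rewrite eP1 eP2 epq.
by rewrite -eP1 -eP2 -(children_cover neq12 ch1 ch2).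
Qed.

End Forest.

Section ForestMap.
Variables (F G : {set {set I}}) (phi : {set I} -> {set I}).
Hypotheses (forF : is_forest F) (phiFG : forest_map F G phi).

Lemma sub_img P : P \subset img F phi P.
Proof.
rewrite /img; case: ifP => // PF.
move: {2}#|P|.+1 (ltnSn #|P|) => k; elim: k P PF => // k IH C CF ltCk.
have [P1 [P2 [neqP ch1 ch2 _]]] := forF.2.2 C CF.
have [Q1 [Q2 [_ chQ1 chQ2 le1 le2]]] := phiFG.2.2 C P1 P2 ch1 ch2 neqP.
have below P Q : child F P C -> child G Q (phi C) -> img F phi P \subset Q ->
    P \subset phi C.
  move=> chP chQ lePQ; apply: subset_trans (child_sub chQ).
  apply: subset_trans lePQ; rewrite /img; case: ifP => // PF.
  by apply: IH PF _; have := proper_card chP.2.2.1; lia.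
by rewrite {1}(children_cover forF neqP ch1 ch2) subUset (below _ _ ch1 chQ1 le1)
  (below _ _ ch2 chQ2 le2).
Qed.

Lemma separates_map C p q : separates F C p q -> separates G (phi C) p q.
Proof.
case=> P1 [P2 [neqP ch1 ch2 pP1 qP2]].
have [Q1 [Q2 [neqQ chQ1 chQ2 le1 le2]]] := phiFG.2.2 C P1 P2 ch1 ch2 neqP.
exists Q1, Q2; split => //.
  exact: subsetP le1 _ (subsetP (sub_img P1) _ pP1).
exact: subsetP le2 _ (subsetP (sub_img P2) _ qP2).
Qed.

Hypothesis forG : is_forest G.

Lemma img_child_eq C P P' Q Q' :
  child F P C -> child F P' C -> P != P' ->
  child G Q (phi C) -> child G Q' (phi C) -> Q != Q' ->
  img F phi P \subset Q -> img F phi P' \subset Q' -> Q \in verts F -> P = Q.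
Proof.
move=> chP chP' neqP chQ chQ' neqQ leQ leQ' QF; have [CF _] := chP.
have [[x xP] [y yP']] := (verts_nonempty forF chP.2.1, verts_nonempty forF chP'.2.1).
have xQ : x \in Q := subsetP leQ _ (subsetP (sub_img P) _ xP).
have yQ' : y \in Q' := subsetP leQ' _ (subsetP (sub_img P') _ yP').
have xC : x \in C := subsetP (child_sub chP) _ xP.
have yC : y \in C := subsetP (child_sub chP') _ yP'.
have not_leCQ : ~~ (C \subset Q).
  apply: contraNN neqQ => /subsetP/(_ y yC) yQ.
  by apply/eqP; apply: (eq_child forG chQ chQ' yQ yQ').
have [leQC|leCQ] := verts_laminar forF QF (mem_verts CF) xQ xC; last first.
  by rewrite leCQ in not_leCQ.
have ltQC : Q \proper C by rewrite properE leQC.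
have [P'' [chP'' leQP'']] := child_above QF CF ltQC.
case: (child_of_two forF neqP chP chP' chP'') => eP''; subst P''.
  by apply/eqP; rewrite eqEsubset leQP'' (subset_trans (sub_img P) leQ).
by move: neqP; rewrite (eq_child forF chP chP' xP (subsetP leQP'' _ xQ)) eqxx.
Qed.

Lemma down_closed_image :
    (forall v w, v \in G -> w \in phi @: F -> v \proper w -> v \in phi @: F) ->
  forall u, u \in phi @: F -> u \in F /\ (forall R, child G R u -> child F R u).
Proof.
move=> down u; move: {2}#|u|.+1 (ltnSn #|u|) => k.
elim: k u => // k IH u ltuk /imsetP[C CF eu]; subst u.
have [P1 [P2 [neqP ch1 ch2 _]]] := forF.2.2 C CF.
have [Q1 [Q2 [neqQ chQ1 chQ2 le1 le2]]] := phiFG.2.2 C P1 P2 ch1 ch2 neqP.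
have QF Q : child G Q (phi C) -> Q \in verts F.
  move=> [_ [QG [ltQ _]]]; move: QG; rewrite inE => /orP[QG|leafQ]; last first.
    by rewrite inE leafQ orbT.
  have QimF : Q \in phi @: F by apply: down QG _ ltQ; apply/imsetP; exists C.
  have ltQk : #|Q| < k by have := proper_card ltQ; lia.
  exact/mem_verts/(IH Q ltQk QimF).1.
have neqP' : P2 != P1 by rewrite eq_sym.
have neqQ' : Q2 != Q1 by rewrite eq_sym.
have eP1 := img_child_eq ch1 ch2 neqP chQ1 chQ2 neqQ le1 le2 (QF _ chQ1).
have eP2 := img_child_eq ch2 ch1 neqP' chQ2 chQ1 neqQ' le2 le1 (QF _ chQ2).
have phiC : phi C = C.
  by rewrite (children_cover forG neqQ chQ1 chQ2) (children_cover forF neqP ch1 ch2) eP1 eP2.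
move: chQ1 chQ2; rewrite phiC => chQ1 chQ2; split=> // R chR.
by case: (child_of_two forG neqQ chQ1 chQ2 chR) => ->; rewrite -?eP1 -?eP2.
Qed.

End ForestMap.

Lemma forest_map_unique F G phi psi : is_forest F -> is_forest G ->
  forest_map F G phi -> forest_map F G psi -> {in F, phi =1 psi}.
Proof.
move=> forF forG phiFG psiFG C CF.
have [P1 [P2 [neqP ch1 ch2 _]]] := forF.2.2 C CF.
have [[p pP1] [q qP2]] := (verts_nonempty forF ch1.2.1, verts_nonempty forF ch2.2.1).
have sepC : separates F C p q by exists P1, P2.
exact: (separates_unique forG (separates_map forF phiFG sepC)
  (separates_map forF psiFG sepC)).
Qed.

Lemma forest_set0 : is_forest (set0 : {set {set I}}).
Proof. by split; [|split] => C; rewrite inE. Qed.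

Lemma forest_map_set0 G phi : forest_map set0 G phi.
Proof. by split; [|split] => [C|C|C P1 P2 []]; rewrite inE. Qed.

Lemma fle_set0 G : is_forest G -> fle set0 G.
Proof.
by move=> forG; split; [exact: forest_set0 | split=> //; exists id; exact: forest_map_set0].
Qed.

Definition cherry (p q : I) : {set {set I}} := [set [set p; q]].

Lemma cherryC p q : cherry p q = cherry q p.
Proof. by rewrite /cherry setUC. Qed.

Lemma set1_notin_cherry p q r : p != q -> [set r] \notin cherry p q.
Proof. by move=> neq; rewrite inE eqEcard cards1 cards2 neq andbF. Qed.

Lemma verts_cherry p q P : P \in verts (cherry p q) -> P = [set p; q] \/ exists r, P = [set r].
Proof. by rewrite !inE => /orP[/eqP->|/imsetP[r _ ->]]; [left | right; exists r]. Qed.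

Lemma child_cherry_set1 p q : p != q -> child (cherry p q) [set p] [set p; q].
Proof.
move=> neq; split; first exact: set11.
split; first exact: set1_verts.
split.
  rewrite properE sub1set !inE eqxx /=; apply: contraNN neq => /subsetP/(_ q).
  by rewrite !inE eqxx orbT eq_sym => /(_ isT).
case=> Q [/verts_cherry[->|[r ->]] [ltpQ ltQ]]; first by rewrite properxx in ltQ.
by have := proper_card ltpQ; rewrite !cards1.
Qed.

Lemma child_cherry p q P : p != q ->
  child (cherry p q) P [set p; q] <-> P = [set p] \/ P = [set q].
Proof.
move=> neq; split=> [[_ [/verts_cherry[->|[r eP]] [ltP _]]]|[]->].
- by rewrite properxx in ltP.
- have : r \in [set p; q] by rewrite -sub1set -eP proper_sub.
  by rewrite !inE => /orP[]/eqP er; [left | right]; rewrite eP er.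
- exact: child_cherry_set1.
- by rewrite cherryC setUC; apply: child_cherry_set1; rewrite eq_sym.
Qed.

Lemma cherry_forest p q : p != q -> is_forest (cherry p q).
Proof.
move=> neq; split; first by move=> C /set1P->; rewrite cards2 neq.
split; first by move=> C D /set1P-> /set1P->; constructor 1.
move=> C /set1P->; exists [set p], [set q].
split.
- by rewrite (inj_eq set1_inj).
- by apply/(child_cherry _ neq); left.
- by apply/(child_cherry _ neq); right.
- by move=> P /(child_cherry _ neq).
Qed.

Lemma separates_cherry_map G v p q : p != q -> separates G v p q ->
  forest_map (cherry p q) G (fun _ => v).
Proof.
move=> neq [R1 [R2 [neqR ch1 ch2 pR1 qR2]]].
split; first by move=> _ _; exact: ch1.1.
split; first by move=> C D /set1P-> /set1P->.
move=> C P1 P2 chP1; have [/set1P eC _] := chP1; subst C.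
have img1 r : img (cherry p q) (fun _ => v) [set r] = [set r].
  by rewrite /img (negbTE (set1_notin_cherry r neq)).
move=> chP2; move: chP1 chP2; rewrite !child_cherry //.
case=> ->; case=> -> neqP; rewrite ?eqxx // in neqP.
  by exists R1, R2; rewrite !img1 !sub1set.
by exists R2, R1; rewrite !img1 !sub1set eq_sym.
Qed.

Lemma fle_cherry G p q : p != q ->
  fle (cherry p q) G <-> is_forest G /\ exists v, separates G v p q.
Proof.
move=> neq; have forpq := cherry_forest neq.
split=> [[_ [forG [psi psiG]]]|[forG [v sepv]]].
  split=> //; exists (psi [set p; q]).
  exact: (separates_map forpq psiG (separates_pair forpq (set11 _))).
by do 2!split => //; exists (fun _ => v); exact: separates_cherry_map.
Qed.

Lemma lam_cherry T p q v : p != q -> lam T set0 (cherry p q) v <-> separates T v p q.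
Proof.
move=> neq; have forpq := cherry_forest neq.
split=> [[phi0 [psi [_ psiT _]]]|sepv].
  rewrite imset0 setU0 imset_set1 => /set1_inj <-.
  exact: (separates_map forpq psiT (separates_pair forpq (set11 _))).
exists id, (fun _ => v); split.
- exact: forest_map_set0.
- exact: separates_cherry_map.
- by rewrite imset0 inE.
- by rewrite imset0 setU0 imset_set1.
Qed.

Lemma atom_cherry T a : atomT T a -> exists p q, p != q /\ a = cherry p q.
Proof.
case=> _ [[_ [fora _]] [neq0 cover]].
have [p [q [neq pqa]]] := forest_has_cherry fora (introN eqP (nesym neq0)).
exists p, q; split => //.
have le_pq : fle (cherry p q) a.
  by apply/fle_cherry => //; split => //; exists [set p; q]; exact: separates_pair.
case: (cover _ (fle_set0 (cherry_forest neq)) le_pq) => [pq0|//].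
have : [set p; q] \in cherry p q by exact: set11.
by rewrite pq0 inE.
Qed.

End Forests.

Lemma increasing_bounded_id n (f : nat -> nat) :
    (forall j, 1 <= j <= n -> 1 <= f j <= n) ->
    (forall i j, 1 <= i -> i < j -> j <= n -> f i < f j) ->
  forall j, 1 <= j <= n -> f j = j.
Proof.
move=> f_range f_incr.
have lower j : 1 <= j <= n -> j <= f j.
  elim: j => // j IH /andP[_ jn]; case: j IH jn => [|j] IH jn.
    by case/andP: (f_range 1 jn).
  by have := f_incr j.+1 j.+2 isT (ltnSn _) jn; have := IH (ltnW jn); lia.
have upper k : k < n -> f (n - k) <= n - k.
  elim: k => [|k IH] kn; first by rewrite subn0; case/andP: (f_range n ltac:(lia)).
  have := f_incr (n - k.+1) (n - k) ltac:(lia) ltac:(lia) ltac:(lia).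
  by have := IH (ltnW kn); lia.
move=> j jn; have := lower j jn; have := upper (n - j) ltac:(lia).
by rewrite subKn; lia.
Qed.

Section IncreasingChain.
Variables (I : finType) (T : {set {set I}}) (n : nat) (lab : {set I} -> nat)
  (x : nat -> {set {set I}}) (l : nat -> {set I}).
Hypotheses (forT : is_forest T) (lab_nice : nice_labelling T n lab) (x0 : x 0 = set0)
  (x_le_T : forall i, i < n -> fle (x i.+1) T)
  (l_inner : forall i, 1 <= i <= n -> l i \in T)
  (l_lam : forall i, 1 <= i <= n -> lam T (x i.-1) (x i) (l i))
  (l_incr : forall i j, 1 <= i -> i < j -> j <= n -> lab (l i) < lab (l j)).

Lemma lab_l j : 1 <= j <= n -> lab (l j) = j.
Proof.
apply: (@increasing_bounded_id n (fun i => lab (l i))) => // i i_n.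
exact: lab_nice.2.1 _ (l_inner i_n).
Qed.

Lemma chain_le j : j <= n -> fle (x j) T.
Proof. by case: j => [|j] jn; [rewrite x0; exact: fle_set0 | exact: x_le_T]. Qed.

Lemma chain_image j phi : j <= n -> forest_map (x j) T phi ->
  phi @: x j = [set v in T | lab v <= j].
Proof.
elim: j phi => [|j IH] phi jn phiT.
  rewrite x0 imset0; apply/setP => v; rewrite !inE.
  by case vT : (v \in T) => //=; have := lab_nice.2.1 v vT; lia.
have j1n : 0 < j.+1 <= n := jn.
have [phi' [psi [phi'T psiT _ psi_img]]] := l_lam j1n.
rewrite (eq_in_imset (forest_map_unique (chain_le jn).1 forT phiT psiT)) psi_img.
rewrite (IH _ (ltnW jn) phi'T); apply/setP => v; rewrite !inE.
case: (eqVneq v (l j.+1)) => [->|neq] /=; first by rewrite (l_inner j1n) (lab_l j1n) leqnn.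
case vT : (v \in T) => //=.
have : lab v != j.+1.
  apply: contra neq => /eqP lab_v; apply/eqP/(lab_nice.1 _ _ vT (l_inner j1n)).
  by rewrite lab_l.
lia.
Qed.

Lemma cherry_le_chain p q u j : p != q -> separates T u p q -> j <= n ->
  fle (cherry p q) (x j) <-> lab u <= j.
Proof.
move=> neq sepu jn; have [forx [_ [phi phiT]]] := chain_le jn.
have img_x := chain_image jn phiT.
rewrite fle_cherry //; split=> [[_ [C sepC]]|lab_u].
  have phiC := separates_unique forT (separates_map forx phiT sepC) sepu.
  have : u \in phi @: x j.
    by rewrite -phiC; apply/imsetP; exists C => //; exact: separates_inner sepC.
  by rewrite img_x inE => /andP[].
split=> //; exists u.
have u_img : u \in phi @: x j by rewrite img_x inE (separates_inner sepu) lab_u.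
have down v w : v \in T -> w \in phi @: x j -> v \proper w -> v \in phi @: x j.
  rewrite img_x !inE => vT /andP[wT lab_w] ltvw.
  by rewrite vT /=; have := lab_nice.2.2 v w vT wT ltvw; lia.
have [_ children] := down_closed_image forx phiT forT down u_img.
by case: sepu => R1 [R2 [neqR ch1 ch2 pR1 qR2]]; exists R1, R2; split => //; exact: children.
Qed.

End IncreasingChain.

Theorem lemma5p5 (I : finType) (T : {set {set I}}) (n : nat)
  (lab : {set I} -> nat) (x : nat -> {set {set I}}) :
  is_tree T -> #|T| = n -> nice_labelling T n lab ->
  (* x is a maximal chain 0 = x_0 <| x_1 <| ... <| x_n = T in [0,T] *)
  x 0 = set0 -> x n = T ->
  (forall i, i < n -> fle (x i.+1) T /\ fcover (x i) (x i.+1)) ->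
  (* with increasing labels *)
  (exists l : nat -> {set I},
     (forall i, 1 <= i <= n -> l i \in T /\ lam T (x i.-1) (x i) (l i)) /\
     (forall i j, 1 <= i -> i < j -> j <= n -> lab (l i) < lab (l j))) ->
  forall i, 1 <= i <= n ->
  forall a, atomT T a ->
    ((fle a (x i) /\ ~ fle a (x i.-1)) <->
     (exists v, [/\ v \in T, lab v = i & lam T set0 a v])).
Proof.
move=> [forT _] _ lab_nice x0 _ x_chain [l [l_ok l_incr]] i i_n a atom_a.
have [p [q [neq eq_a]]] := atom_cherry atom_a; subst a.
have [_ [u sepu]] := (fle_cherry T neq).1 atom_a.1.
have le_chain k (kn : k <= n) := cherry_le_chain forT lab_nice x0
  (fun k kn => (x_chain k kn).1) (fun k kn => (l_ok k kn).1)
  (fun k kn => (l_ok k kn).2) l_incr neq sepu kn.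
rewrite (le_chain i ltac:(lia)) (le_chain i.-1 ltac:(lia)).
split=> [[le_i not_le_i1]|[v [vT lab_v /(lam_cherry _ _ neq) sepv]]].
  by exists u; split; [exact: separates_inner sepu | lia | exact/lam_cherry].
by rewrite (separates_unique forT sepv sepu) in lab_v; lia.
Qed.
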